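(* Let $\gamma_1,\dots,\gamma_n,\beta_1,\dots,\beta_n\in\mathbb{C}$ be non-zero with $\gamma_j=\lambda+i\omega_j$, let $H^5_1,\dots,H^5_n$ be complex polynomials in $u_1,\dots,u_n,\bar u_1,\dots,\bar u_n$ such that for each $k$ the $k$th non-resonance condition of $H^5_k$ holds, and set $P_k:=\widehat{H}^5_k$ (the $k$th modified polynomial of $H^5_k$) and $P=(P_1,\dots,P_n)$. Define $$L^1_k(u):=[P_k\|(\beta_1u_1|u_1|^2,\dots,\beta_nu_n|u_n|^2)](u),\qquad L^2_k(u):=[\beta_ku_k|u_k|^2\|P](u).$$ Then $S_k(u):=L^1_k(u)-L^2_k(u)$ can be expressed as a sum of (complex multiples of) terms of the form $u_k^2\overline{R(u)}$ and $|u_j|^2R(u)$, with $j\in\{1,\dots,n\}$ and $R(u)$ a monomial term appearing in $P_k(u)$.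
   Context: For a monomial $c\,u_1^{s_1}\cdots u_n^{s_n}\bar u_1^{t_1}\cdots\bar u_n^{t_n}$, its $k$th non-resonance condition is $\sum_j s_j\omega_j-\sum_j t_j\omega_j-\omega_k\neq0$; that of a polynomial is the conjunction over its monomial terms. The modified polynomial $\widehat{H}^5_k$ is obtained from $H^5_k$ by dividing each monomial $c\,u^{s}\bar u^{t}$ by $\sum_j s_j\gamma_j+\sum_j t_j\bar\gamma_j-\gamma_k$. The bracket is $[R\|S](u)=\sum_{j}\Big(\frac{\partial R}{\partial u_j}S_j+\frac{\partial R}{\partial\bar u_j}\overline{S_j}\Big)$, treating $u_j,\bar u_j$ as independent variables. *)

(* with multinomials' mpoly for polynomials in
   u_1..u_n, ubar_1..ubar_n (treated as 2n independent variables). *)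
From HB Require Import structures.
From mathcomp Require Import all_boot all_order all_algebra.
From mathcomp Require Import mpoly.
Set Implicit Arguments. Unset Strict Implicit. Unset Printing Implicit Defensive.
Import Order.TTheory GRing.Theory Num.Theory Num.Syntax.
Local Open Scope ring_scope.

Section Defs.
Variables (C : numClosedFieldType) (n : nat).

Definition uidx (j : 'I_n) : 'I_(n + n) := lshift n j.
Definition ubidx (j : 'I_n) : 'I_(n + n) := rshift n j.

Definition uv (j : 'I_n) : {mpoly C[n + n]} := 'X_(uidx j).
Definition ubv (j : 'I_n) : {mpoly C[n + n]} := 'X_(ubidx j).

Definition sexp (m : 'X_{1..n + n}) (j : 'I_n) : nat := m (uidx j).
Definition texp (m : 'X_{1..n + n}) (j : 'I_n) : nat := m (ubidx j).

Definition mterm (p : {mpoly C[n + n]}) (m : 'X_{1..n + n}) : {mpoly C[n + n]} :=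
  p@_m *: 'X_[m].

Definition conjp (p : {mpoly C[n + n]}) : {mpoly C[n + n]} :=
  \sum_(m <- msupp p)
     (p@_m)^* *: \prod_(j < n) (ubv j ^+ sexp m j * uv j ^+ texp m j).

Definition nonres (om : 'I_n -> C) (k : 'I_n) (p : {mpoly C[n + n]}) : Prop :=
  forall m, m \in msupp p ->
    \sum_(j < n) (sexp m j)%:R * om j - \sum_(j < n) (texp m j)%:R * om j
      - om k != 0.

Definition modified (gam : 'I_n -> C) (k : 'I_n) (p : {mpoly C[n + n]})
  : {mpoly C[n + n]} :=
  \sum_(m <- msupp p)
    (p@_m / (\sum_(j < n) (sexp m j)%:R * gam j
             + \sum_(j < n) (texp m j)%:R * (gam j)^* - gam k)) *: 'X_[m].

Definition bracket (R : {mpoly C[n + n]}) (S : 'I_n -> {mpoly C[n + n]})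
  : {mpoly C[n + n]} :=
  \sum_(j < n) (mderiv (uidx j) R * S j + mderiv (ubidx j) R * conjp (S j)).

(* the cubic field beta_j u_j |u_j|^2 = beta_j u_j (u_j ubar_j) *)
Definition cubic (beta : 'I_n -> C) (j : 'I_n) : {mpoly C[n + n]} :=
  beta j *: (uv j * (uv j * ubv j)).

End Defs.

(* By Euler's identity
   [d/du_j X^m * u_j = s_j X^m], the bracket of a monomial of P_k with the
   cubic field is a combination of the |u_j|^2 X^m.  Since beta_k u_k |u_k|^2
   only involves u_k and ubar_k, the bracket of it with P contributes
   2 beta_k |u_k|^2 P_k and beta_k u_k^2 conj(P_k); expanding P_k and its
   conjugate over the monomials of P_k gives the claimed form.  No property of
   P_k is used beyond it being a polynomial. *)

From HB Require Import structures.
From mathcomp Require Import all_boot all_order all_algebra.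
From mathcomp Require Import mpoly.
From mathcomp Require Import ring.
Import Order.TTheory GRing.Theory Num.Theory Num.Syntax.
Local Open Scope ring_scope.

Section Brackets.
Variables (C : numClosedFieldType) (n : nat).
Implicit Types (p : {mpoly C[n + n]}) (m : 'X_{1..n + n}) (beta : 'I_n -> C).

Lemma mderivX1 (i l : 'I_(n + n)) : ('X_l : {mpoly C[n + n]})^`M(i) = (l == i)%:R.
Proof.
rewrite mderivX mnm1E; case: eqP => [->|_]; last by rewrite scale0r.
by rewrite -{1}(add0m U_(i)%MM) addmK mpolyX0 scale1r.
Qed.

Lemma mderivX_mulX (i : 'I_(n + n)) m :
  ('X_[m] : {mpoly C[n + n]})^`M(i) * 'X_i = (m i)%:R *: 'X_[m].
Proof.
rewrite mderivX -scalerAl; case Emi: (m i) => [|k]; first by rewrite !scale0r.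
rewrite -mpolyXD submK //; apply/mnm_lepP => j; rewrite mnm1E.
by case: eqP => // <-; rewrite Emi.
Qed.

Lemma mderiv_mulX (i : 'I_(n + n)) p :
  p^`M(i) * 'X_i = \sum_(m <- msupp p) (m i)%:R *: mterm p m.
Proof.
rewrite {1}[p]mpolyE raddf_sum /= mulr_suml; apply: eq_bigr => m _.
by rewrite mderivZ -scalerAl mderivX_mulX /mterm scalerA mulrC -scalerA.
Qed.

Lemma conjpZX (c : C) m :
  conjp (c *: 'X_[m]) =
  c^* *: \prod_(j < n) (ubv C j ^+ sexp m j * uv C j ^+ texp m j).
Proof.
have [->|c0] := eqVneq c 0.
  by rewrite scale0r /conjp msupp0 big_nil conjC0 scale0r.
by rewrite /conjp msuppMCX // big_seq1 mcoeffZ mcoeffX eqxx mulr1.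
Qed.

Lemma conjp_sum_mterm p : conjp p = \sum_(m <- msupp p) conjp (mterm p m).
Proof. by apply: eq_bigr => m _; rewrite /mterm conjpZX. Qed.

Lemma conjp_cubic beta j :
  conjp (cubic beta j) = (beta j)^* *: (ubv C j * (ubv C j * uv C j)).
Proof.
rewrite /cubic /uv /ubv -!mpolyXD conjpZX; congr (_ *: _).
rewrite (bigD1 j) //= big1 ?mulr1 => [|i /negbTE neq_ij];
  rewrite /sexp /texp !mnmDE !mnm1E /uidx /ubidx !eq_shift ?eqxx /=.
  by rewrite expr1 expr2 -!mpolyXD addmA.
by rewrite eq_sym neq_ij /= !expr0 mulr1.
Qed.

Lemma mderiv_cubic_u beta k j :
  (cubic beta k)^`M(uidx j) = (j == k)%:R *: ((2 * beta k) *: (uv C k * ubv C k)).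
Proof.
rewrite /cubic /uv /ubv mderivZ !mderivM !mderivX1 /uidx /ubidx !eq_shift /=.
case: (eqVneq k j) => _; last by rewrite !(mul0r, mulr0, addr0, scale0r, scaler0).
by rewrite !(mul1r, mulr0, addr0, scale1r) [2 * _]mulrC -scalerA scaler_nat mulr2n.
Qed.

Lemma mderiv_cubic_ub beta k j :
  (cubic beta k)^`M(ubidx j) = (j == k)%:R *: (beta k *: uv C k ^+ 2).
Proof.
rewrite /cubic /uv /ubv mderivZ !mderivM !mderivX1 /uidx /ubidx !eq_shift /=.
case: (eqVneq k j) => _; last by rewrite !(mul0r, mulr0, addr0, scale0r, scaler0).
by rewrite !(mul0r, mulr1, add0r, scale1r) expr2.
Qed.

Lemma bracket_mpoly_cubic p beta :
  bracket p (cubic beta) =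
  \sum_(m <- msupp p) \sum_(j < n)
     (beta j * (sexp m j)%:R + (beta j)^* * (texp m j)%:R)
       *: (uv C j * ubv C j * mterm p m).
Proof.
rewrite exchange_big; apply: eq_bigr => j _.
have Eu : p^`M(uidx j) * cubic beta j =
          beta j *: (uv C j * ubv C j * (p^`M(uidx j) * uv C j)).
  by rewrite /cubic -scalerAr; congr (_ *: _); ring.
have Eub : p^`M(ubidx j) * conjp (cubic beta j) =
           (beta j)^* *: (uv C j * ubv C j * (p^`M(ubidx j) * ubv C j)).
  by rewrite conjp_cubic -scalerAr; congr (_ *: _); ring.
rewrite Eu Eub /uv /ubv !mderiv_mulX !mulr_sumr !scaler_sumr -big_split /=.
apply: eq_bigr => m _.
by rewrite /mterm -!scalerAr !scalerA -scalerDl mulrDl -!mulrA.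
Qed.

Lemma bracket_cubic_mpoly beta k (S : 'I_n -> {mpoly C[n + n]}) :
  bracket (cubic beta k) S =
  \sum_(m <- msupp (S k))
     ((2 * beta k) *: (uv C k * ubv C k * mterm (S k) m)
      + beta k *: (uv C k ^+ 2 * conjp (mterm (S k) m))).
Proof.
rewrite /bracket (bigD1 k) //= big1 ?addr0 => [|j /negbTE neq_jk]; last first.
  by rewrite mderiv_cubic_u mderiv_cubic_ub neq_jk !scale0r !mul0r addr0.
rewrite mderiv_cubic_u mderiv_cubic_ub eqxx !scale1r conjp_sum_mterm.
rewrite {1}[S k]mpolyE !mulr_sumr -big_split; apply: eq_bigr => m _ /=.
by rewrite -!scalerAl -!scalerAr.
Qed.

Lemma sum_scale_delta (c : C) (Y : 'I_n -> {mpoly C[n + n]}) k :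
  \sum_(j < n) ((j == k)%:R * c) *: Y j = c *: Y k.
Proof.
rewrite (bigD1 k) //= eqxx mul1r big1 ?addr0 // => j /negbTE ->.
by rewrite mul0r scale0r.
Qed.

End Brackets.

Theorem mainTheorem9 (C : numClosedFieldType) (n : nat) (lam : C)
  (om gam beta : 'I_n -> C) (H : 'I_n -> {mpoly C[n + n]}) :
  lam \is Num.real ->
  (forall j, om j \is Num.real) ->
  (forall j, gam j = lam + 'i * om j) ->
  (forall j, gam j != 0) ->
  (forall j, beta j != 0) ->
  (forall k, nonres om k (H k)) ->
  let P := fun k => modified gam k (H k) in
  let L1 := fun k => bracket (P k) (cubic beta) in
  let L2 := fun k => bracket (cubic beta k) P in
  forall k : 'I_n,
  exists (a : 'X_{1..n + n} -> 'I_n -> C) (b : 'X_{1..n + n} -> C),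
    L1 k - L2 k =
    \sum_(m <- msupp (P k))
      (b m *: (uv C k ^+ 2 * conjp (mterm (P k) m))
       + \sum_(j < n) a m j *: ((uv C j * ubv C j) * mterm (P k) m)).
Proof.
move=> _ _ _ _ _ _ P L1 L2 k.
exists (fun m j => beta j * (sexp m j)%:R + (beta j)^* * (texp m j)%:R
                   - (j == k)%:R * (2 * beta k)).
exists (fun _ => - beta k).
rewrite /L1 /L2 bracket_mpoly_cubic bracket_cubic_mpoly -sumrB.
apply: eq_bigr => m _.
under [in RHS]eq_bigr do rewrite scalerBl.
by rewrite sumrB sum_scale_delta scaleNr opprD addrA addrC.
Qed.
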